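(* Let $\mathcal F$ be a convex cone of numerical functions on a set $Y$ and let $f_0\in\mathcal F$ with $0<f_0<\infty$. For every numerical function $\varphi\ge0$ on $Y$ let $F_\varphi:=\inf\{f\in\mathcal F: f\ge\varphi\}$. Then $F_{\varphi 1_{Y\setminus A}}=F_\varphi$ for every numerical function $\varphi\ge0$ on $Y$ and every $A\subset Y$ such that $\alpha\varphi\le F_\varphi\wedge(Mf_0)$ on $A$ for some $\alpha,M\in(1,\infty)$. *)

(* classical reals, extended by +oo and -oo ("numerical" values). *)
From Stdlib Require Import Reals ClassicalEpsilon.
Open Scope R_scope.

Inductive ER : Type := Fin (r : R) | PInf | NInf.

Definition Ele (x y : ER) : Prop :=
  match x, y with
  | NInf, _ => True
  | _, PInf => True
  | PInf, _ => False
  | _, NInf => False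
  | Fin a, Fin b => a <= b
  end.

Definition Emin (x y : ER) : ER :=
  match x, y with
  | NInf, _ => NInf
  | _, NInf => NInf
  | PInf, _ => y
  | _, PInf => x
  | Fin a, Fin b => Fin (Rmin a b)
  end.

(* addition; the value on the undefined pairs (+oo,-oo) is irrelevant since
   the cone axiom below only requires closure when sums are defined *)
Definition Eplus (x y : ER) : ER :=
  match x, y with
  | Fin a, Fin b => Fin (a + b)
  | PInf, _ => PInf
  | _, PInf => PInf
  | NInf, _ => NInf
  | _, NInf => NInf
  end.

Definition Eundef_sum (x y : ER) : Prop :=
  (x = PInf /\ y = NInf) \/ (x = NInf /\ y = PInf).

(* multiplication by a real scalar (convention 0 * (+-oo) = 0) *)
Definition Escal (a : R) (x : ER) : ER :=
  match x with
  | Fin r => Fin (a * r)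
  | PInf => if Rlt_dec 0 a then PInf else if Rlt_dec a 0 then NInf else Fin 0
  | NInf => if Rlt_dec 0 a then NInf else if Rlt_dec a 0 then PInf else Fin 0
  end.

(* greatest lower bound of a set of extended reals (it always exists) *)
Definition is_Einf (S : ER -> Prop) (m : ER) : Prop :=
  (forall x, S x -> Ele m x) /\
  (forall m', (forall x, S x -> Ele m' x) -> Ele m' m).

Definition Einf (S : ER -> Prop) : ER :=
  epsilon (inhabits PInf) (is_Einf S).

Definition convex_cone {Y : Type} (F : (Y -> ER) -> Prop) : Prop :=
  (forall f g, F f -> F g -> (forall y, ~ Eundef_sum (f y) (g y)) ->
     F (fun y => Eplus (f y) (g y))) /\
  (forall (a : R) f, 0 < a -> F f -> F (fun y => Escal a (f y))).

Definition red {Y : Type} (F : (Y -> ER) -> Prop) (phi : Y -> ER) : Y -> ER :=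
  fun y => Einf (fun v => exists f, F f /\ (forall z, Ele (phi z) (f z)) /\ v = f y).

Definition restr_compl {Y : Type} (phi : Y -> ER) (A : Y -> Prop) : Y -> ER :=
  fun y => if excluded_middle_informative (A y) then Fin 0 else phi y.

(* Let g in F with g >= phi 1_{Y\A}; since f0 is finite, h_t := g + t f0 lies in F
   for every t > 0.  Whenever alpha phi <= h_t on A we get phi <= h_{t/alpha}
   everywhere (off A already phi <= g), and then F_phi <= h_{t/alpha}, hence
   alpha phi <= F_phi <= h_{t/alpha} on A again.  Starting from
   alpha phi <= M f0 <= h_M on A, this gives F_phi <= g + M alpha^{-n} f0 for all n,
   so F_phi <= g.  Taking the infimum over g gives F_phi <= F_{phi 1_{Y\A}}; the
   other inequality is monotonicity of phi |-> F_phi. *)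
From Stdlib Require Import Reals Lra Classical ClassicalEpsilon.
Open Scope R_scope.

Lemma Ele_refl x : Ele x x.
Proof. destruct x; simpl; auto; lra. Qed.

Lemma Ele_trans x y z : Ele x y -> Ele y z -> Ele x z.
Proof. destruct x, y, z; simpl; intros; auto; try lra; contradiction. Qed.

Lemma Ele_antisym x y : Ele x y -> Ele y x -> x = y.
Proof. destruct x, y; simpl; intros; try contradiction; auto; f_equal; lra. Qed.

Lemma Ele_Emin x a b : Ele x (Emin a b) -> Ele x a /\ Ele x b.
Proof.
  destruct x, a, b; simpl; intros; try contradiction; auto;
    pose proof (Rmin_l r0 r1); pose proof (Rmin_r r0 r1); split; lra.
Qed.

Lemma Ele_Eplus_r x y b : Ele x y -> 0 <= b -> Ele x (Eplus y (Fin b)).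
Proof. destruct x, y; simpl; intros; auto; lra. Qed.

Lemma Ele_Eplus_l x y b : Ele x (Fin b) -> Ele (Fin 0) y -> Ele x (Eplus y (Fin b)).
Proof. destruct x, y; simpl; intros; auto; lra. Qed.

Lemma Escal_PInf a : 0 < a -> Escal a PInf = PInf.
Proof. intro Ha; simpl; destruct (Rlt_dec 0 a); [reflexivity | lra]. Qed.

Lemma Ele_Eplus_div a x y b : 1 <= a -> Ele (Fin 0) y ->
  Ele (Escal a x) (Eplus y (Fin b)) -> Ele x (Eplus y (Fin (b / a))).
Proof.
  intros Ha Hy; destruct x as [p| |]; [| rewrite Escal_PInf by lra |];
    destruct y as [q| |]; simpl in *; auto; intro Hle.
  apply (Rmult_le_reg_l a); [lra|].
  replace (a * (q + b / a)) with (a * q + b) by (field; lra); nra.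
Qed.

Lemma Ele_Eplus_geometric x y b a : 1 < a ->
  (forall n, Ele x (Eplus y (Fin (b * (/ a) ^ n)))) -> Ele x y.
Proof.
  intros Ha Hx.
  assert (Hia : 0 < / a < 1).
  { split; [apply Rinv_0_lt_compat; lra|].
    apply (Rmult_lt_reg_l a); [lra|]; rewrite Rinv_r; lra. }
  pose proof (Hx O) as Hx0; simpl in Hx0.
  destruct x as [c| |], y as [q| |]; simpl in *; auto.
  apply Rnot_lt_le; intro Hqc.
  destruct (Rle_lt_dec b 0) as [Hb|Hb]; [lra|].
  assert (Habs : Rabs (/ a) < 1) by (rewrite Rabs_right; lra).
  destruct (pow_lt_1_zero _ Habs ((c - q) / b)) as [N HN];
    [apply Rdiv_lt_0_compat; lra|].
  specialize (HN N (le_n N)); specialize (Hx N); simpl in Hx.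
  rewrite Rabs_right in HN by (apply Rle_ge, pow_le; lra).
  apply (Rmult_lt_compat_l b) in HN; [|lra].
  replace (b * ((c - q) / b)) with (c - q) in HN by (field; lra).
  lra.
Qed.

Lemma Einf_exists S : exists m, is_Einf S m.
Proof.
  destruct (classic (S NInf)) as [HN|HN].
  { exists NInf; split; [intros x _; exact I | intros m' Hm'; apply Hm', HN]. }
  destruct (classic (exists r, S (Fin r))) as [[r0 Hr0]|HF].
  2: { exists PInf; split.
       - intros [r| |] Hx; simpl; auto; apply HF; eauto.
       - intros [r| |] _; simpl; auto. }
  destruct (classic (exists b, forall r, S (Fin r) -> b <= r)) as [[b Hb]|Hunb].
  - (* the infimum of the finite part is minus the supremum of its negation *)
    assert (Hbd : bound (fun x => S (Fin (- x)))).
    { exists (- b); intros x Hx; specialize (Hb _ Hx); lra. }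
    assert (Hne : exists x, S (Fin (- x))).
    { exists (- r0); rewrite Ropp_involutive; exact Hr0. }
    destruct (completeness _ Hbd Hne) as [l [Hub Hlub]].
    exists (Fin (- l)); split.
    + intros [r| |] Hx; simpl; [| exact I | exact (HN Hx)].
      assert (Hr : S (Fin (- - r))) by (rewrite Ropp_involutive; exact Hx).
      specialize (Hub _ Hr); lra.
    + intros [r| |] Hm'; simpl; [| exact (Hm' _ Hr0) | exact I].
      assert (l <= - r); [|lra].
      apply Hlub; intros x Hx; specialize (Hm' _ Hx); simpl in Hm'; lra.
  - exists NInf; split; [intros; exact I|].
    intros [r| |] Hm'; simpl; [| exact (Hm' _ Hr0) | exact I].
    apply Hunb; exists r; intros r1 H1; exact (Hm' _ H1).
Qed.

Lemma Einf_spec S : is_Einf S (Einf S).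
Proof. unfold Einf; apply epsilon_spec, Einf_exists. Qed.

Lemma Einf_le S x : S x -> Ele (Einf S) x.
Proof. apply (proj1 (Einf_spec S)). Qed.

Lemma le_Einf S m : (forall x, S x -> Ele m x) -> Ele m (Einf S).
Proof. apply (proj2 (Einf_spec S)). Qed.

Section Reduced.

Variables (Y : Type) (F : (Y -> ER) -> Prop).

Lemma red_le (phi f : Y -> ER) y :
  F f -> (forall z, Ele (phi z) (f z)) -> Ele (red F phi y) (f y).
Proof. intros Ff Hf; apply Einf_le; eauto. Qed.

Lemma le_red (phi : Y -> ER) m y :
  (forall f, F f -> (forall z, Ele (phi z) (f z)) -> Ele m (f y)) ->
  Ele m (red F phi y).
Proof. intro Hm; apply le_Einf; intros x (f & Ff & Hf & ->); auto. Qed.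

Lemma red_monotone (psi phi : Y -> ER) y :
  (forall z, Ele (psi z) (phi z)) -> Ele (red F psi y) (red F phi y).
Proof.
  intro Hle; apply le_red; intros f Ff Hf.
  apply red_le; auto; intro z; exact (Ele_trans _ _ _ (Hle z) (Hf z)).
Qed.

End Reduced.

Lemma restr_compl_in {Y : Type} (phi : Y -> ER) (A : Y -> Prop) z :
  A z -> restr_compl phi A z = Fin 0.
Proof. intro Hz; unfold restr_compl; destruct excluded_middle_informative; tauto. Qed.

Lemma restr_compl_out {Y : Type} (phi : Y -> ER) (A : Y -> Prop) z :
  ~ A z -> restr_compl phi A z = phi z.
Proof. intro Hz; unfold restr_compl; destruct excluded_middle_informative; tauto. Qed.

Lemma restr_compl_le {Y : Type} (phi : Y -> ER) (A : Y -> Prop) z :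
  Ele (Fin 0) (phi z) -> Ele (restr_compl phi A z) (phi z).
Proof.
  intro H0; destruct (classic (A z)) as [Hz|Hz];
    [rewrite restr_compl_in | rewrite restr_compl_out]; auto; apply Ele_refl.
Qed.

Lemma restr_compl_ge0 {Y : Type} (phi : Y -> ER) (A : Y -> Prop) z :
  Ele (Fin 0) (phi z) -> Ele (Fin 0) (restr_compl phi A z).
Proof.
  intro H0; destruct (classic (A z)) as [Hz|Hz];
    [rewrite restr_compl_in | rewrite restr_compl_out]; auto; apply Ele_refl.
Qed.

Section Sweeping.

Variables (Y : Type) (F : (Y -> ER) -> Prop) (f0 phi g : Y -> ER) (A : Y -> Prop).
Variables alpha M : R.
Hypothesis F_cone : convex_cone F.
Hypothesis F_f0 : F f0.
Hypothesis f0_pos : forall y, exists r, 0 < r /\ f0 y = Fin r.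
Hypothesis phi_ge0 : forall y, Ele (Fin 0) (phi y).
Hypothesis alpha_gt1 : 1 < alpha.
Hypothesis M_gt0 : 0 < M.
Hypothesis alpha_phi_le_A : forall y, A y ->
  Ele (Escal alpha (phi y)) (Emin (red F phi y) (Escal M (f0 y))).
Hypothesis F_g : F g.
Hypothesis g_ge : forall z, Ele (restr_compl phi A z) (g z).

Definition shift (t : R) : Y -> ER := fun z => Eplus (g z) (Escal t (f0 z)).

Lemma g_ge0 z : Ele (Fin 0) (g z).
Proof. apply (Ele_trans _ (restr_compl phi A z)); [apply restr_compl_ge0, phi_ge0 | apply g_ge]. Qed.

Lemma F_shift t : 0 < t -> F (shift t).
Proof.
  intro Ht; apply (proj1 F_cone); [exact F_g | apply (proj2 F_cone); auto |].
  intros z; destruct (f0_pos z) as [r [_ ->]]; pose proof (g_ge0 z).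
  intros [[_ Hz] | [Hz _]]; [discriminate | rewrite Hz in *; contradiction].
Qed.

Lemma phi_le_shift_div t : 0 <= t ->
  (forall z, A z -> Ele (Escal alpha (phi z)) (shift t z)) ->
  forall z, Ele (phi z) (shift (t / alpha) z).
Proof.
  intros Ht HA z; unfold shift; destruct (f0_pos z) as [r [Hr Er]]; rewrite Er in *.
  simpl; replace (t / alpha * r) with (t * r / alpha) by (field; lra).
  destruct (classic (A z)) as [Hz|Hz].
  - apply Ele_Eplus_div; [lra | apply g_ge0 |]; specialize (HA z Hz).
    unfold shift in HA; rewrite Er in HA; exact HA.
  - apply Ele_Eplus_r; [|apply Rmult_le_pos; [nra | left; apply Rinv_0_lt_compat; lra]].
    rewrite <- (restr_compl_out phi A z Hz); apply g_ge.
Qed.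

Lemma alpha_phi_le_shift t : 0 < t -> (forall z, Ele (phi z) (shift t z)) ->
  forall z, A z -> Ele (Escal alpha (phi z)) (shift t z).
Proof.
  intros Ht Hphi z Hz.
  apply (Ele_trans _ (red F phi z)); [apply (Ele_Emin _ _ _ (alpha_phi_le_A z Hz)) |].
  apply red_le; [apply F_shift |]; auto.
Qed.

Lemma phi_le_shift_geometric n : forall z, Ele (phi z) (shift (M * (/ alpha) ^ S n) z).
Proof.
  assert (Hia : 0 < / alpha) by (apply Rinv_0_lt_compat; lra).
  induction n as [|n IHn].
  - rewrite pow_1; apply phi_le_shift_div; [lra|]; intros z Hz.
    destruct (f0_pos z) as [r [_ Er]]; unfold shift; rewrite Er.
    apply Ele_Eplus_l; [| apply g_ge0].
    pose proof (proj2 (Ele_Emin _ _ _ (alpha_phi_le_A z Hz))) as H; rewrite Er in H; exact H.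
  - replace (M * (/ alpha) ^ S (S n)) with (M * (/ alpha) ^ S n / alpha)
      by (simpl; field; lra).
    assert (Ht : 0 < M * (/ alpha) ^ S n) by (apply Rmult_lt_0_compat; [|apply pow_lt]; auto).
    apply phi_le_shift_div; [lra | apply alpha_phi_le_shift; auto].
Qed.

Lemma red_le_of_ge_restr_compl z : Ele (red F phi z) (g z).
Proof.
  destruct (f0_pos z) as [r [_ Er]].
  apply (Ele_Eplus_geometric _ _ (M * / alpha * r) alpha); [exact alpha_gt1 |]; intro n.
  assert (Ht : 0 < M * (/ alpha) ^ S n)
    by (apply Rmult_lt_0_compat; [|apply pow_lt, Rinv_0_lt_compat]; lra).
  pose proof (red_le Y F phi _ z (F_shift _ Ht) (phi_le_shift_geometric n)) as Hz.
  unfold shift in Hz; rewrite Er in Hz; simpl in Hz.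
  replace (M * / alpha * r * (/ alpha) ^ n) with (M * (/ alpha) ^ S n * r) by (simpl; ring).
  exact Hz.
Qed.

End Sweeping.

Theorem proposition3p3 (Y : Type) (F : (Y -> ER) -> Prop) (f0 : Y -> ER) :
  convex_cone F -> F f0 ->
  (forall y, exists r, 0 < r /\ f0 y = Fin r) ->
  forall (phi : Y -> ER) (A : Y -> Prop),
  (forall y, Ele (Fin 0) (phi y)) ->
  (exists alpha M : R, 1 < alpha /\ 1 < M /\
     forall y, A y ->
       Ele (Escal alpha (phi y)) (Emin (red F phi y) (Escal M (f0 y)))) ->
  forall y, red F (restr_compl phi A) y = red F phi y.
Proof.
  intros Hcone Hf0 Hpos phi A Hphi (alpha & M & Ha & HM & HA) y.
  apply Ele_antisym.
  - apply red_monotone; intro z; apply restr_compl_le, Hphi.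
  - apply le_red; intros g Fg Hg.
    apply (red_le_of_ge_restr_compl Y F f0 phi g A alpha M); auto; lra.
Qed.
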